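(* Suppose that $\Omega$ is a finite signature containing at least one symbol of arity $n\ge 2$, and let $X$ be a finite nonempty set. Then the Polish representation $\Phi_X:\overline{\Omega}_X\mathsf{Fin}_\Omega\to S_{\mathsf M}$ is not injective.
   Context: $\Omega=\biguplus_n\Omega_n$ has finitely many symbols in total (discrete topology), and $X$ is discrete. $\mathsf{Fin}_\Omega$ is the class of all finite (discrete) $\Omega$-algebras, and $\overline{\Omega}_X\mathsf{Fin}_\Omega$ is the free profinite $\Omega$-algebra on $X$ (the profinite $\Omega$-algebra with a map $X\to\overline{\Omega}_X\mathsf{Fin}_\Omega$ whose image generates a dense subalgebra, such that every map from $X$ into a finite $\Omega$-algebra extends uniquely to a continuous homomorphism). Let $\overline{\Omega}_{X\cup\Omega}\mathsf M$ be the free profinite monoid on the finite set $X\cup\Omega$ (disjoint union of $X$ and all $\Omega_k$). Make it an $\Omega$-algebra by $E_k(w,u_1,\dots,u_k)=wu_1\cdots u_k$ for $w\in\Omega_k$ (product in the monoid); $S_{\mathsf M}$ is the closed $\Omega$-subalgebra generated by $X$. The Polish representation $\Phi_X$ is the unique continuous $\Omega$-homomorphism $\overline{\Omega}_X\mathsf{Fin}_\Omega\to S_{\mathsf M}$ with $\Phi_X(x)=x$ for all $x\in X$. *)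

From HB Require Import structures.
From mathcomp Require Import all_boot all_order.
From mathcomp Require Import all_classical.
From mathcomp Require Import topology.
Set Implicit Arguments. Unset Strict Implicit. Unset Printing Implicit Defensive.
Local Open Scope classical_set_scope.

(* A finite signature Omega: a finite type [S] of symbols with arities [ar]. *)
Definition ops (S : finType) (ar : S -> nat) (A : Type) :=
  forall w : S, ('I_(ar w) -> A) -> A.

Definition is_hom (S : finType) (ar : S -> nat) (A B : Type)
  (opA : ops ar A) (opB : ops ar B) (f : A -> B) :=
  forall (w : S) (u : 'I_(ar w) -> A), f (opA w u) = opB w (f \o u).

Definition op_closed (S : finType) (ar : S -> nat) (A : Type)
  (opA : ops ar A) (P : set A) :=
  forall (w : S) (u : 'I_(ar w) -> A), (forall i, P (u i)) -> P (opA w u).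

Definition gen_subalg (S : finType) (ar : S -> nat) (A : Type)
  (opA : ops ar A) (G : set A) : set A :=
  \bigcap_(P in [set P | G `<=` P /\ op_closed opA P]) P.

Definition closed_gen_subalg (S : finType) (ar : S -> nat) (A : topologicalType)
  (opA : ops ar A) (G : set A) : set A :=
  \bigcap_(P in [set P | G `<=` P /\ op_closed opA P /\ closed P]) P.

Definition cont_to_discrete (A : topologicalType) (B : Type) (f : A -> B) :=
  forall b : B, open (f @^-1` [set b]).

Definition topological_algebra (S : finType) (ar : S -> nat)
  (A : topologicalType) (opA : ops ar A) :=
  forall w : S, continuous (opA w : {ptws 'I_(ar w) -> A} -> A).

Definition profinite_algebra (S : finType) (ar : S -> nat)
  (A : topologicalType) (opA : ops ar A) :=
  [/\ topological_algebra opA, compact [set: A], hausdorff_space A &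
      forall a b : A, a <> b ->
        exists (B : finType) (opB : ops ar B) (h : A -> B),
          [/\ is_hom opA opB h, cont_to_discrete h & h a <> h b]].

Definition free_profinite_algebra (S : finType) (ar : S -> nat) (X : Type)
  (F : topologicalType) (opF : ops ar F) (iota : X -> F) :=
  [/\ profinite_algebra opF,
      closure (gen_subalg opF (range iota)) = [set: F] &
      forall (B : finType) (opB : ops ar B) (f : X -> B),
        exists! h : F -> B,
          [/\ is_hom opF opB h, cont_to_discrete h & h \o iota = f]].

Definition monoid_axioms (M : Type) (mul : M -> M -> M) (one : M) :=
  [/\ forall a b c, mul a (mul b c) = mul (mul a b) c,
      forall a, mul one a = a & forall a, mul a one = a].

Definition is_monoid_hom (M N : Type) (mulM : M -> M -> M) (oneM : M)
  (mulN : N -> N -> N) (oneN : N) (f : M -> N) :=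
  f oneM = oneN /\ forall a b, f (mulM a b) = mulN (f a) (f b).

Definition profinite_monoid (M : topologicalType) (mul : M -> M -> M) (one : M) :=
  [/\ monoid_axioms mul one,
      continuous (fun p : M * M => mul p.1 p.2),
      compact [set: M], hausdorff_space M &
      forall a b : M, a <> b ->
        exists (B : finType) (mulB : B -> B -> B) (oneB : B) (h : M -> B),
          [/\ monoid_axioms mulB oneB, is_monoid_hom mul one mulB oneB h,
              cont_to_discrete h & h a <> h b]].

Definition gen_submonoid (M : Type) (mul : M -> M -> M) (one : M)
  (G : set M) : set M :=
  \bigcap_(P in [set P | G `<=` P /\ P one /\
                 forall a b, P a -> P b -> P (mul a b)]) P.

Definition free_profinite_monoid (Y : Type) (M : topologicalType)
  (mul : M -> M -> M) (one : M) (iota : Y -> M) :=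
  [/\ profinite_monoid mul one,
      closure (gen_submonoid mul one (range iota)) = [set: M] &
      forall (B : finType) (mulB : B -> B -> B) (oneB : B) (f : Y -> B),
        monoid_axioms mulB oneB ->
        exists! h : M -> B,
          [/\ is_monoid_hom mul one mulB oneB h, cont_to_discrete h &
              h \o iota = f]].

Definition polish_ops (S : finType) (ar : S -> nat) (X : Type) (M : Type)
  (mul : M -> M -> M) (iota : X + S -> M) : ops ar M :=
  fun w u => foldl mul (iota (inr w)) [seq u i | i <- enum 'I_(ar w)].

(* Fix a symbol f of arity n >= 2 and a generator x, and let
   g t = f(t, x, ..., x),  u_m = f(g^m x, x, ..., x, g^m x),  v_m = g^m u_m.
   In a finite monoid quotient of the free profinite monoid, g acts as
   t |-> p t c, where p and c are the images of f and x^(n-1), so g^m is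
   t |-> p^m t c^m; for m = N! with N large, p^m and c^m are idempotents, and
   then v_m and u_m have the same image.  Hence Phi identifies a cluster point
   a of (v_{N!}) with a cluster point b of (u_{N!}).  But in the finite algebra
   on bool in which every operation negates its last argument, v_m evaluates to
   true and u_m to false, so a <> b. *)

From HB Require Import structures.
From mathcomp Require Import all_boot all_order.
From mathcomp Require Import all_classical.
From mathcomp Require Import topology.
From mathcomp Require Import zify.
Local Open Scope classical_set_scope.
Set Implicit Arguments. Unset Strict Implicit.

Section MonoidPowers.
Variables (B : Type) (mulB : B -> B -> B) (oneB : B).
Hypothesis monB : monoid_axioms mulB oneB.
Local Notation "a * b" := (mulB a b).

Lemma mulBA a b c : a * (b * c) = (a * b) * c. Proof. by case: monB. Qed.
Lemma mul1B a : oneB * a = a. Proof. by case: monB. Qed.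
Lemma mulB1 a : a * oneB = a. Proof. by case: monB. Qed.

Definition pw z n := iter n (mulB z) oneB.
Arguments pw : simpl never.

Lemma pwS z n : pw z n.+1 = z * pw z n. Proof. by []. Qed.

Lemma pwD z m n : pw z (m + n) = pw z m * pw z n.
Proof. by elim: m => [|m IH]; rewrite ?mul1B // addSn !pwS IH mulBA. Qed.

Lemma pw_comm z m : pw z m * z = z * pw z m.
Proof.
have pw1 : pw z 1 = z by rewrite /pw /= mulB1.
by rewrite -{2 3}pw1 -!pwD addnC.
Qed.

Lemma foldl_nseq y z n : foldl mulB y (nseq n z) = y * pw z n.
Proof. by elim: n y => [|n IH] y /=; rewrite ?mulB1 // IH pwS mulBA. Qed.

Lemma pw_periodic z i j l d : pw z i = pw z j -> i <= j -> i <= l -> (j - i) %| d ->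
  pw z (l + d) = pw z l.
Proof.
move=> eij ij il /dvdnP [r ->].
have shift k : i <= k -> pw z (k + (j - i)) = pw z k.
  move=> ik; rewrite -(subnK ik) -addnA (addnC i) (subnK ij).
  by rewrite !pwD eij.
elim: r => [|r IH]; first by rewrite addn0.
by rewrite mulSn (addnC (j - i)) addnA shift ?IH // (leq_trans il) ?leq_addr.
Qed.

End MonoidPowers.

Section FiniteMonoidPowers.
Variables (B : finType) (mulB : B -> B -> B) (oneB : B).
Hypothesis monB : monoid_axioms mulB oneB.
Local Notation pw := (pw mulB oneB).

Lemma pw_collision z : exists i j, [/\ i < j, j <= #|B| & pw z i = pw z j].
Proof.
have /injectivePn [i [j ne_ij e_ij]] : ~~ injectiveb (fun k : 'I_#|B|.+1 => pw z k).
  by apply/injectiveP => /leq_card; rewrite card_ord ltnn.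
have [iB jB] := (ltn_ord i, ltn_ord j).
case: (ltngtP i j) => [ij|ji|/val_inj eq_ij]; last by rewrite eq_ij eqxx in ne_ij.
- by exists i, j.
- by exists j, i.
Qed.

Lemma pw_fact_idem z : exists e, mulB e e = e /\ forall N, #|B| <= N -> pw z N`! = e.
Proof.
have [i [j [ij jB eij]]] := pw_collision z.
have per l d : i <= l -> (j - i) %| d -> pw z (l + d) = pw z l.
  by apply: pw_periodic eij (ltnW ij).
have p_fact N : #|B| <= N -> (j - i) %| N`!.
  by move=> BN; apply: dvdn_fact; rewrite subn_gt0 ij /=; lia.
have i_fact N : #|B| <= N -> i <= N`!.
  by move=> BN; apply: leq_trans (fact_geq N); lia.
exists (pw z (#|B|)`!); split; first by rewrite -(pwD monB) per ?p_fact ?i_fact.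
move=> N BN; rewrite -(per N`! (#|B|)`!) ?p_fact ?i_fact //.
by rewrite addnC per ?p_fact ?i_fact.
Qed.

End FiniteMonoidPowers.

Definition args (A : Type) (n : nat) (z : A) (l : seq A) : 'I_n -> A :=
  fun i => nth z l i.

Lemma map_args_enum (A : Type) (n : nat) (z : A) (l : seq A) :
  size l = n -> [seq args z l i | i <- enum 'I_n] = l.
Proof. by move=> <-; rewrite (map_comp (nth z l) val) val_enum_ord -/(mkseq _ _) mkseq_nth. Qed.

Lemma nth_map_dflt (A B : Type) (h : A -> B) (z : A) (l : seq A) i :
  h (nth z l i) = nth (h z) (map h l) i.
Proof.
case: (ltnP i (size l)) => il; first by rewrite (nth_map z).
by rewrite !nth_default ?size_map.
Qed.

Lemma hom_args (S : finType) (ar : S -> nat) (A B : Type) (opA : ops ar A) (opB : ops ar B)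
    (h : A -> B) : is_hom opA opB h ->
  forall w (z : A) (l : seq A), h (opA w (args z l)) = opB w (args (h z) (map h l)).
Proof.
by move=> hom w z l; rewrite hom; congr (opB w _); apply: funext => i; exact: nth_map_dflt.
Qed.

Section FillTerms.
Variables (S : finType) (ar : S -> nat) (f : S).

Definition fill_first (A : Type) (opA : ops ar A) (z t : A) : A :=
  opA f (args z (t :: nseq (ar f).-1 z)).

Definition fill_ends (A : Type) (opA : ops ar A) (z s t : A) : A :=
  opA f (args z (s :: rcons (nseq (ar f).-2 z) t)).

Definition ends_term (A : Type) (opA : ops ar A) (z : A) (m : nat) : A :=
  fill_ends opA z (iter m (fill_first opA z) z) (iter m (fill_first opA z) z).

Definition wrapped_term (A : Type) (opA : ops ar A) (z : A) (m : nat) : A :=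
  iter m (fill_first opA z) (ends_term opA z m).

Section HomTerms.
Variables (A B : Type) (opA : ops ar A) (opB : ops ar B) (h : A -> B).
Hypothesis hom_h : is_hom opA opB h.

Lemma hom_fill_first z t : h (fill_first opA z t) = fill_first opB (h z) (h t).
Proof. by rewrite /fill_first (hom_args hom_h) /= map_nseq. Qed.

Lemma hom_fill_ends z s t : h (fill_ends opA z s t) = fill_ends opB (h z) (h s) (h t).
Proof. by rewrite /fill_ends (hom_args hom_h) /= map_rcons map_nseq. Qed.

Lemma hom_iter_fill_first z m t :
  h (iter m (fill_first opA z) t) = iter m (fill_first opB (h z)) (h t).
Proof. by elim: m => //= m IH; rewrite hom_fill_first IH. Qed.

Lemma hom_ends_term z m : h (ends_term opA z m) = ends_term opB (h z) m.
Proof. by rewrite /ends_term hom_fill_ends !hom_iter_fill_first. Qed.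

Lemma hom_wrapped_term z m : h (wrapped_term opA z m) = wrapped_term opB (h z) m.
Proof. by rewrite /wrapped_term hom_iter_fill_first hom_ends_term. Qed.

End HomTerms.

Hypothesis ar_f : 2 <= ar f.

Definition negb_last_ops : ops ar bool :=
  fun w v => ~~ last false [seq v i | i <- enum 'I_(ar w)].

Lemma negb_last_fill_first t : fill_first negb_last_ops false t = true.
Proof.
rewrite /fill_first /negb_last_ops map_args_enum /= ?size_nseq; last by lia.
have -> : (ar f).-1 = (ar f).-2 + 1 by lia.
by rewrite nseqD cats1 last_rcons.
Qed.

Lemma negb_last_fill_ends s t : fill_ends negb_last_ops false s t = ~~ t.
Proof.
rewrite /fill_ends /negb_last_ops map_args_enum /= ?size_rcons ?size_nseq; last by lia.
by rewrite last_rcons.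
Qed.

Lemma negb_last_ends_term m : 0 < m -> ends_term negb_last_ops false m = false.
Proof. by case: m => // m _; rewrite /ends_term negb_last_fill_ends iterS negb_last_fill_first. Qed.

Lemma negb_last_wrapped_term m : 0 < m -> wrapped_term negb_last_ops false m = true.
Proof. by case: m => // m _; rewrite /wrapped_term iterS negb_last_fill_first. Qed.

Section PolishTerms.
Variables (X : Type) (B : finType) (mulB : B -> B -> B) (oneB : B) (iotaB : X + S -> B).
Hypothesis monB : monoid_axioms mulB oneB.
Local Notation "a * b" := (mulB a b).
Local Notation pw := (pw mulB oneB).
Local Notation opB := (polish_ops (ar:=ar) mulB iotaB).
Local Notation P := (iotaB (inr f)).

Lemma polish_fill_first z t : fill_first opB z t = P * t * pw z (ar f).-1.
Proof.
rewrite /fill_first /polish_ops map_args_enum /= ?size_nseq; last by lia.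
exact: (foldl_nseq monB).
Qed.

Lemma polish_fill_ends z s t : fill_ends opB z s t = P * s * pw z (ar f).-2 * t.
Proof.
rewrite /fill_ends /polish_ops map_args_enum /= ?size_rcons ?size_nseq; last by lia.
by rewrite foldl_rcons (foldl_nseq monB).
Qed.

Lemma polish_iter_fill_first z m t :
  iter m (fill_first opB z) t = pw P m * t * pw (pw z (ar f).-1) m.
Proof.
elim: m => [|m IH]; first by rewrite /pw /= (mul1B monB) (mulB1 monB).
by rewrite iterS polish_fill_first IH !pwS -(pw_comm monB (pw z _)) !(mulBA monB).
Qed.

Lemma polish_wrapped_ends_term_fact z : exists v, forall N, #|B| <= N ->
  wrapped_term opB z N`! = v /\ ends_term opB z N`! = v.
Proof.
have [e [ee HP]] := pw_fact_idem monB P.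
have [e' [ee' HC]] := pw_fact_idem monB (pw z (ar f).-1).
have eP : e * P = P * e by rewrite -(HP _ (leqnn _)) (pw_comm monB).
pose w := e * z * e'.
exists (P * w * pw z (ar f).-2 * w) => N BN.
have ends_eq : ends_term opB z N`! = P * w * pw z (ar f).-2 * w.
  by rewrite /ends_term polish_fill_ends polish_iter_fill_first HP ?HC.
split=> //; rewrite /wrapped_term polish_iter_fill_first ends_eq HP ?HC //.
by rewrite !(mulBA monB) eP -(mulBA monB P e e) ee -(mulBA monB _ e' e') ee'.
Qed.

End PolishTerms.

End FillTerms.

Lemma foldl_morph (A B : Type) (mulA : A -> A -> A) (mulB : B -> B -> B) (h : A -> B) :
    (forall a b, h (mulA a b) = mulB (h a) (h b)) ->
  forall l a, h (foldl mulA a l) = foldl mulB (h a) (map h l).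
Proof. by move=> hmul; elim=> [|c l IH] a //=; rewrite IH hmul. Qed.

Lemma polish_hom_comp (S : finType) (ar : S -> nat) (X A M B : Type) (opA : ops ar A)
    (mul : M -> M -> M) (iota : X + S -> M) (mulB : B -> B -> B) (h : M -> B) (g : A -> M) :
    (forall a b, h (mul a b) = mulB (h a) (h b)) ->
  is_hom opA (polish_ops mul iota) g -> is_hom opA (polish_ops mulB (h \o iota)) (h \o g).
Proof. by move=> hmul hom w u; rewrite /= hom /polish_ops (foldl_morph hmul) -map_comp. Qed.

Lemma cont_to_discrete_comp (A B : topologicalType) (C : Type) (g : A -> B) (h : B -> C) :
  continuous g -> cont_to_discrete h -> cont_to_discrete (h \o g).
Proof. by move=> /continuousP g_cont h_cont c; exact: g_cont _ (h_cont c). Qed.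

Lemma compact_seq_cluster (T : topologicalType) (s : nat -> T) : compact [set: T] ->
  exists a : T, forall (B : Type) (h : T -> B), cont_to_discrete h ->
    forall c N, (forall n, N <= n -> h (s n) = c) -> h a = c.
Proof.
move=> cT; have [a [_ a_cluster]] := cT (fmap s \oo) _ filterT.
exists a => B h h_cont c N hc.
have [] := a_cluster (s @` [set n | N <= n]) (h @^-1` [set h a]).
- by exists N => // n Nn; exists n.
- exact: open_nbhs_nbhs.
by move=> _ [[n Nn <-] /= <-]; apply: hc.
Qed.

Theorem proposition4p14
  (S : finType) (ar : S -> nat) (X : finType)
  (Hn : exists w : S, 2 <= ar w) (HX : 0 < #|X|)
  (F : topologicalType) (opF : ops ar F) (iotaF : X -> F)
  (HF : free_profinite_algebra opF iotaF)
  (M : topologicalType) (mul : M -> M -> M) (one : M) (iotaM : X + S -> M)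
  (HM : free_profinite_monoid mul one iotaM)
  (Phi : F -> M)
  (Phi_cont : continuous Phi)
  (Phi_hom : is_hom opF (polish_ops (ar:=ar) mul iotaM) Phi)
  (Phi_gen : forall x : X, Phi (iotaF x) = iotaM (inl x))
  (Phi_SM : Phi @` [set: F] `<=`
            closed_gen_subalg (polish_ops (ar:=ar) mul iotaM) (iotaM @` (range inl))) :
  ~ injective Phi.
Proof.
move=> Phi_inj.
have [f ar_f] := Hn; have /card_gt0P [x _] := HX.
have [[_ F_compact _ _] _ F_free] := HF.
pose z := iotaF x.
have [a a_lim] := compact_seq_cluster (fun N => wrapped_term f opF z N`!) F_compact.
have [b b_lim] := compact_seq_cluster (fun N => ends_term f opF z N`!) F_compact.
have Phi_ab : Phi a = Phi b.
  have [[_ _ _ _ M_sep] _ _] := HM.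
  apply: contrapT => /M_sep [B [mulB [oneB [h [monB [_ h_mul] h_cont]]]]].
  apply; change ((h \o Phi) a = (h \o Phi) b).
  have H_hom := polish_hom_comp h_mul Phi_hom.
  have H_cont := cont_to_discrete_comp Phi_cont h_cont.
  have [v Hv] := polish_wrapped_ends_term_fact ar_f (h \o iotaM) monB ((h \o Phi) z).
  rewrite (a_lim _ _ H_cont v #|B|) ?(b_lim _ _ H_cont v #|B|) // => N BN.
  - by rewrite (hom_ends_term _ H_hom); case: (Hv N BN).
  - by rewrite (hom_wrapped_term _ H_hom); case: (Hv N BN).
have [k [[k_hom k_cont k_gen] _]] := F_free _ (negb_last_ops (ar:=ar)) (fun=> false).
have kz : k z = false by exact: (congr1 (fun g => g x) k_gen).
have : k a = k b by rewrite (Phi_inj _ _ Phi_ab).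
rewrite (a_lim _ _ k_cont true 1) ?(b_lim _ _ k_cont false 1) // => N N1.
- by rewrite (hom_ends_term _ k_hom) kz negb_last_ends_term ?fact_gt0.
- by rewrite (hom_wrapped_term _ k_hom) kz negb_last_wrapped_term ?fact_gt0.
Qed.
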